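(* Let $N,\mu,\beta,\sigma,\gamma,p>0$ and $0<\rho<1$ and consider $$\begin{aligned}S'&=\mu N-\tfrac{\beta}{N}S(1-\rho)I-\tfrac{p}{N}S-\mu S, & E'&=\tfrac{\beta}{N}S(1-\rho)I-(\sigma+\mu) E, & I'&=\sigma E-(\gamma+\mu) I,\\ R'&=\gamma I-\mu R, & V'&=\tfrac{p}{N}S-\mu V.\end{aligned}$$ Let $\Sigma=\{(S,E,I,R,V)\in\mathbb{R}_+^5:S+E+I+R+V=N\}$, $\Omega=\{(S,E,I)\in\mathbb{R}_+^3:S+E+I\le N\}$ and $\mathcal{R}_0=\dfrac{\mu N\sigma\beta(1-\rho)}{(\sigma+\mu)(\gamma+\mu)(p+\mu N)}$. If $\mathcal{R}_0>1$ and the initial condition $(S_0,E_0,I_0,R(0),V_0)\in\Sigma$ satisfies $(S_0,E_0,I_0)\in\operatorname{int}\Omega$, then the solution converges as $t\to+\infty$ to the endemic equilibrium $P^e=(S^e,E^e,I^e,R^e,V^e)$, where $$S^e=\frac{(\sigma+\mu)(\gamma+\mu)N}{\sigma\beta(1-\rho)},\quad I^e=\frac{\mu N\sigma\beta(1-\rho)-(\sigma+\mu)(\gamma+\mu)(p+\mu N)}{(\sigma+\mu)(\gamma+\mu)\beta(1-\rho)},$$ $$E^e=\frac{\gamma+\mu}{\sigma}I^e,\quad R^e=\frac{\gamma}{\mu}I^e,\quad V^e=\frac{p}{\mu N}S^e.$$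
   Context: SEIR model with vaccination at constant effective rate $p$ and equal birth/death rate $\mu$; $\mathcal{R}_0$ is the reproductive number. *)

From Stdlib Require Import Reals.
From Coquelicot Require Import Coquelicot.
Open Scope R_scope.

Definition repro_number (N mu beta sigma gamma p rho : R) : R :=
  (mu * N * sigma * beta * (1 - rho)) /
  ((sigma + mu) * (gamma + mu) * (p + mu * N)).

Definition Se (N mu beta sigma gamma rho : R) : R :=
  (sigma + mu) * (gamma + mu) * N / (sigma * beta * (1 - rho)).
Definition Ie (N mu beta sigma gamma p rho : R) : R :=
  (mu * N * sigma * beta * (1 - rho) - (sigma + mu) * (gamma + mu) * (p + mu * N)) /
  ((sigma + mu) * (gamma + mu) * beta * (1 - rho)).
Definition Ee (N mu beta sigma gamma p rho : R) : R :=
  (gamma + mu) / sigma * Ie N mu beta sigma gamma p rho.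
Definition Req (N mu beta sigma gamma p rho : R) : R :=
  gamma / mu * Ie N mu beta sigma gamma p rho.
Definition Ve (N mu beta sigma gamma p rho : R) : R :=
  p / (mu * N) * Se N mu beta sigma gamma rho.

Definition is_solution (N mu beta sigma gamma p rho : R)
  (S E I Rr V : R -> R) : Prop :=
  (forall t, 0 < t ->
     is_derive S t (mu * N - beta / N * S t * (1 - rho) * I t - p / N * S t - mu * S t) /\
     is_derive E t (beta / N * S t * (1 - rho) * I t - (sigma + mu) * E t) /\
     is_derive I t (sigma * E t - (gamma + mu) * I t) /\
     is_derive Rr t (gamma * I t - mu * Rr t) /\
     is_derive V t (p / N * S t - mu * V t)) /\
  filterlim S (at_right 0) (locally (S 0)) /\
  filterlim E (at_right 0) (locally (E 0)) /\
  filterlim I (at_right 0) (locally (I 0)) /\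
  filterlim Rr (at_right 0) (locally (Rr 0)) /\
  filterlim V (at_right 0) (locally (V 0)).

Definition in_Sigma (N s e i r v : R) : Prop :=
  0 <= s /\ 0 <= e /\ 0 <= i /\ 0 <= r /\ 0 <= v /\ s + e + i + r + v = N.

Definition in_int_Omega (N s e i : R) : Prop :=
  0 < s /\ 0 < e /\ 0 < i /\ s + e + i < N.

From Stdlib Require Import Reals Lra Psatz Classical.
From Coquelicot Require Import Coquelicot.
Open Scope R_scope.

(* The equations for (S, E, I) do not involve R and V, and R, V solve
   x' = f - mu x with convergent forcing f, so they converge to lim f / mu.

   A solution of the (S, E, I) system starting in the interior of Omega stays
   positive: at the first time a component would vanish, its equation pushes it
   up. Moreover S + E + I is eventually bounded. Along the solution the
   Volterra-type function
     L = g(S^e, S) + g(E^e, E) + (sigma + mu) / sigma * g(I^e, I),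
     g(c, x) = x - c - c ln (x / c) >= 0,
   satisfies L' <= -(p / N + mu) (S - S^e)^2 / S by the AM-GM inequality
   (which follows from ln x <= x - 1). Since L is bounded below and the
   derivatives of the solution are bounded, Barbalat's lemma gives S -> S^e;
   applied to S and to I it gives S' -> 0 and I' -> 0, and then I -> I^e and
   E -> E^e are read off the equations for S' and I'. *)

Lemma ln_le_sub_1 (x : R) : 0 < x -> ln x <= x - 1.
Proof. intros Hx. pose proof (exp_ineq1_le (ln x)) as Hexp. rewrite exp_ln in Hexp; lra. Qed.

Lemma ball_of_Rabs_lt (x e y : R) : Rabs (y - x) < e -> ball x e y.
Proof. intros H. exact H. Qed.

Lemma Rabs_add_le (x y X Y : R) : Rabs x <= X -> Rabs y <= Y -> Rabs (x + y) <= X + Y.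
Proof. intros. pose proof (Rabs_triang x y). lra. Qed.

Lemma Rabs_sub_le (x y X Y : R) : Rabs x <= X -> Rabs y <= Y -> Rabs (x - y) <= X + Y.
Proof. intros. unfold Rminus. pose proof (Rabs_triang x (- y)). pose proof (Rabs_Ropp y). lra. Qed.

Lemma Rabs_mul_le (x y X Y : R) : Rabs x <= X -> Rabs y <= Y -> Rabs (x * y) <= X * Y.
Proof. intros. rewrite Rabs_mult. apply Rmult_le_compat; auto; apply Rabs_pos. Qed.

Lemma Rabs_opp_le (x X : R) : Rabs x <= X -> Rabs (- x) <= X.
Proof. rewrite Rabs_Ropp. auto. Qed.

Lemma is_derive_mvt (f df : R -> R) (a b : R) :
  a < b -> (forall t, a <= t <= b -> is_derive f t (df t)) ->
  exists c, a < c < b /\ f b - f a = df c * (b - a).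
Proof.
intros Hab Hd. destruct (MVT_cor2 f df a b Hab) as [c [Heq Hc]].
- intros c Hc. apply is_derive_Reals, Hd, Hc.
- exists c. split; assumption.
Qed.

Lemma nonincreasing_of_deriv_nonpos (f df : R -> R) (T0 : R) :
  (forall t, T0 < t -> is_derive f t (df t)) -> (forall t, T0 < t -> df t <= 0) ->
  forall s t, T0 < s -> s <= t -> f t <= f s.
Proof.
intros Hd Hneg s t Hs Hst. destruct (Req_dec s t) as [<-|Hne]; [lra|].
destruct (is_derive_mvt f df s t) as [c [Hc Heq]]; [lra| intros; apply Hd; lra|].
pose proof (Hneg c ltac:(lra)). nra.
Qed.

Lemma Rabs_sub_le_of_deriv_bound (g dg : R -> R) (T0 K : R) :
  (forall t, T0 < t -> is_derive g t (dg t)) -> (forall t, T0 < t -> Rabs (dg t) <= K) ->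
  forall s t, T0 < s -> s <= t -> Rabs (g t - g s) <= K * (t - s).
Proof.
intros Hd Hb s t Hs Hst. destruct (Req_dec s t) as [<-|Hne].
{ rewrite Rminus_eq_0, Rabs_R0. lra. }
destruct (is_derive_mvt g dg s t) as [c [Hc ->]]; [lra| intros; apply Hd; lra|].
rewrite Rabs_mult, (Rabs_right (t - s)) by lra.
apply Rmult_le_compat_r; [lra|]. apply Hb. lra.
Qed.

Lemma lt_of_deriv_pos_left (f : R -> R) (x l a : R) :
  is_derive f x l -> 0 < l -> a < x -> exists t, a < t < x /\ f t < f x.
Proof.
intros Hd Hl Hax. apply is_derive_Reals in Hd.
destruct (Hd (l / 2) ltac:(lra)) as [d Hdl].
set (h := - Rmin (d / 2) ((x - a) / 2)).
assert (Hh : - (d / 2) <= h < 0 /\ - ((x - a) / 2) <= h).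
{ pose proof (cond_pos d). pose proof (Rmin_l (d / 2) ((x - a) / 2)).
  pose proof (Rmin_r (d / 2) ((x - a) / 2)).
  pose proof (Rmin_glb_lt (d / 2) ((x - a) / 2) 0 ltac:(lra) ltac:(lra)). unfold h. lra. }
assert (Hq : Rabs ((f (x + h) - f x) / h - l) < l / 2).
{ apply Hdl; [lra|]. rewrite Rabs_left by lra. pose proof (cond_pos d). lra. }
apply Rabs_lt_between in Hq.
exists (x + h). split; [lra|].
assert (Hpos : 0 < (f (x + h) - f x) / h) by lra.
assert (Hneg : (f (x + h) - f x) / h * h < 0) by nra.
unfold Rdiv in Hneg. rewrite Rmult_assoc, Rinv_l, Rmult_1_r in Hneg by lra. lra.
Qed.

Lemma is_derive_mult_exp (x : R -> R) (m t l : R) :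
  is_derive x t l -> is_derive (fun s => x s * exp (m * s)) t ((l + m * x t) * exp (m * t)).
Proof.
intros Hd. auto_derive; [exists l; exact Hd|].
change (fun s => x s) with x.
rewrite (is_derive_unique _ _ _ Hd). ring.
Qed.

Lemma pos_of_linear_inflow (x q : R -> R) (k t1 T : R) :
  (forall t, 0 < t -> is_derive x t (q t - k * x t)) -> 0 < t1 < T ->
  (forall t, t1 < t < T -> 0 <= q t) -> 0 < x t1 -> 0 < x T.
Proof.
intros Hd Ht1 Hq Hx1.
destruct (is_derive_mvt (fun t => x t * exp (k * t)) (fun t => q t * exp (k * t)) t1 T)
  as [c [Hc Heq]]; [lra| |].
- intros t Ht. replace (q t * exp (k * t)) with ((q t - k * x t + k * x t) * exp (k * t)) by ring.
  apply is_derive_mult_exp, Hd. lra.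
- apply Rnot_le_lt. intros HxT.
  assert (0 <= q c * exp (k * c) * (T - t1))
    by (apply Rmult_le_pos; [apply Rmult_le_pos; [apply Hq, Hc | apply Rlt_le, exp_pos] | lra]).
  assert (x T * exp (k * T) <= 0) by (pose proof (exp_pos (k * T)); nra).
  assert (0 < x t1 * exp (k * t1)) by (apply Rmult_lt_0_compat; [exact Hx1 | apply exp_pos]).
  lra.
Qed.

Lemma sub_le_of_deriv_le_linear (x dx : R -> R) (T0 m c : R) :
  (forall t, T0 < t -> is_derive x t (dx t)) -> (forall t, T0 < t -> dx t <= m * (c - x t)) ->
  forall s t, T0 < s -> s <= t -> x t - c <= (x s - c) * exp (m * (s - t)).
Proof.
intros Hd Hle s t Hs Hst.
set (z := fun u => (x u - c) * exp (m * u)).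
assert (Hz : z t <= z s).
{ apply (nonincreasing_of_deriv_nonpos z (fun u => (dx u + m * (x u - c)) * exp (m * u)) T0);
    try lra.
  - intros u Hu. apply (is_derive_mult_exp (fun v => x v - c)).
    rewrite <- (Rminus_0_r (dx u)).
    exact (is_derive_minus x (fun _ => c) u (dx u) 0 (Hd u Hu) (is_derive_const c u)).
  - intros u Hu. pose proof (Hle u Hu). pose proof (exp_pos (m * u)). nra. }
assert (Hexp : exp (m * (s - t)) * exp (m * t) = exp (m * s))
  by (rewrite <- exp_plus; f_equal; ring).
apply (Rmult_le_reg_r (exp (m * t))); [apply exp_pos|].
rewrite Rmult_assoc, Hexp. exact Hz.
Qed.

Lemma is_lim_exp_decay (m s : R) : 0 < m -> is_lim (fun t => exp (m * (s - t))) p_infty 0.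
Proof.
intros Hm. apply (is_lim_comp exp (fun t => m * (s - t)) p_infty 0 m_infty).
- exact is_lim_exp_m.
- apply is_lim_spec. intros M. exists (s - M / m). intros t Ht.
  apply (Rmult_lt_compat_l m) in Ht; [|exact Hm].
  replace (m * (s - M / m)) with (m * s - M) in Ht by (field; lra). lra.
- exists 0. intros. discriminate.
Qed.

Lemma eventually_lt_of_linear_ode (x f : R -> R) (m l eps : R) : 0 < m -> 0 < eps ->
  (forall t, 0 < t -> is_derive x t (f t - m * x t)) -> is_lim f p_infty l ->
  exists T, forall t, T < t -> x t < l / m + eps.
Proof.
intros Hm He Hx Hf.
apply is_lim_spec in Hf. destruct (Hf (mkposreal (m * eps / 2) ltac:(nra))) as [T1 HT1].
set (T0 := Rmax T1 0). set (s := T0 + 1). set (c := l / m + eps / 2).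
assert (HT0 : T1 <= T0 /\ 0 <= T0) by (split; [apply Rmax_l | apply Rmax_r]).
assert (Hcmp : forall t, s <= t -> x t - c <= (x s - c) * exp (m * (s - t))).
{ intros t Hst.
  apply (sub_le_of_deriv_le_linear x (fun t => f t - m * x t) T0); unfold s in *; try lra.
  - intros u Hu. apply Hx. lra.
  - intros u Hu. specialize (HT1 u ltac:(lra)). simpl in HT1. apply Rabs_lt_between in HT1.
    replace (m * (c - x u)) with (l + m * eps / 2 - m * x u) by (unfold c; field; lra). lra. }
pose proof (is_lim_scal_l _ (x s - c) p_infty 0 (is_lim_exp_decay m s Hm)) as Hdecay.
apply is_lim_spec in Hdecay. destruct (Hdecay (mkposreal (eps / 2) ltac:(lra))) as [T2 HT2].
exists (Rmax s T2). intros t Ht.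
pose proof (Rmax_l s T2). pose proof (Rmax_r s T2).
pose proof (Hcmp t ltac:(lra)). specialize (HT2 t ltac:(lra)). simpl in HT2.
rewrite Rmult_0_r, Rminus_0_r in HT2. apply Rabs_lt_between in HT2. unfold c in *. lra.
Qed.

Lemma is_lim_linear_ode (x f : R -> R) (m l : R) : 0 < m ->
  (forall t, 0 < t -> is_derive x t (f t - m * x t)) -> is_lim f p_infty l ->
  is_lim x p_infty (l / m).
Proof.
intros Hm Hx Hf. apply is_lim_spec. intros eps.
destruct (eventually_lt_of_linear_ode x f m l eps Hm (cond_pos eps) Hx Hf) as [T1 HT1].
destruct (eventually_lt_of_linear_ode (fun t => - x t) (fun t => - f t) m (- l) eps Hm
  (cond_pos eps)) as [T2 HT2].
- intros t Ht. replace (- f t - m * - x t) with (- (f t - m * x t)) by ring.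
  apply (is_derive_opp x). apply Hx, Ht.
- exact (is_lim_opp f p_infty l Hf).
- exists (Rmax T1 T2). intros t Ht. pose proof (Rmax_l T1 T2). pose proof (Rmax_r T1 T2).
  specialize (HT1 t ltac:(lra)). specialize (HT2 t ltac:(lra)).
  replace (- l / m) with (- (l / m)) in HT2 by (field; lra).
  apply Rabs_def1; lra.
Qed.

Lemma ex_lim_nonincreasing (L : R -> R) (T0 B : R) :
  (forall s t, T0 < s -> s <= t -> L t <= L s) -> (forall t, T0 < t -> B <= L t) ->
  exists l : R, is_lim L p_infty l.
Proof.
intros Hmono Hlow.
set (A := fun y => exists t, T0 < t /\ y = - L t).
assert (Hbound : bound A) by (exists (- B); intros y [t [Ht ->]]; specialize (Hlow t Ht); lra).
assert (Hne : exists y, A y) by (exists (- L (T0 + 1)), (T0 + 1); split; [lra | reflexivity]).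
destruct (completeness A Hbound Hne) as [m [Hub Hlub]].
exists (- m). apply is_lim_spec. intros eps.
assert (Hclose : exists t, T0 < t /\ m - eps < - L t).
{ apply NNPP. intros Hn.
  assert (Hm : m <= m - eps).
  { apply Hlub. intros y [t [Ht ->]]. apply Rnot_lt_le. intros Hlt.
    apply Hn. exists t. split; assumption. }
  pose proof (cond_pos eps). lra. }
destruct Hclose as [t0 [Ht0 Hlt]].
exists t0. intros t Ht.
assert (- L t <= m) by (apply Hub; exists t; split; [lra | reflexivity]).
pose proof (Hmono t0 t Ht0 ltac:(lra)).
apply Rabs_def1; lra.
Qed.

Lemma barbalat (x dx h dh : R -> R) (T0 K c : R) :
  (forall t, T0 < t -> is_derive x t (dx t)) -> is_lim x p_infty c ->
  (forall t, T0 < t -> Rabs (h t) <= Rabs (dx t)) ->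
  (forall t, T0 < t -> is_derive h t (dh t)) -> (forall t, T0 < t -> Rabs (dh t) <= K) ->
  is_lim h p_infty 0.
Proof.
intros Hx Hc Hhx Hh HK. apply is_lim_spec. intros eps.
pose proof (cond_pos eps) as He.
assert (HK0 : 0 <= K) by (pose proof (Rabs_pos (dh (T0 + 1))); pose proof (HK (T0 + 1)); lra).
set (d := eps / (2 * (K + 1))).
assert (Hd : 0 < d) by (unfold d; apply Rdiv_lt_0_compat; lra).
assert (HKd : K * d <= eps / 2).
{ replace (eps / 2) with ((K + 1) * d) by (unfold d; field; lra). nra. }
apply is_lim_spec in Hc.
destruct (Hc (mkposreal (eps * d / 4) ltac:(nra))) as [T1 HT1]. simpl in HT1.
exists (Rmax T0 T1). intros t Ht. pose proof (Rmax_l T0 T1). pose proof (Rmax_r T0 T1).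
rewrite Rminus_0_r. apply Rnot_le_lt. intros Hge.
destruct (is_derive_mvt x dx t (t + d)) as [u [Hu Heq]]; [lra | intros; apply Hx; lra |].
assert (Hhu : eps / 2 <= Rabs (h u)).
{ pose proof (Rabs_sub_le_of_deriv_bound h dh T0 K Hh HK t u ltac:(lra) ltac:(lra)) as Hlip.
  pose proof (Rabs_triang_inv (h t) (h u)). rewrite <- Rabs_Ropp in Hlip.
  replace (- (h u - h t)) with (h t - h u) in Hlip by ring.
  assert (K * (u - t) <= K * d) by (apply Rmult_le_compat_l; lra). lra. }
assert (Hjump : eps * d / 2 <= Rabs (x (t + d) - x t)).
{ rewrite Heq, Rabs_mult, (Rabs_right (t + d - t)) by lra.
  replace (t + d - t) with d by ring. pose proof (Hhx u ltac:(lra)).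
  nra. }
pose proof (HT1 t ltac:(lra)). pose proof (HT1 (t + d) ltac:(lra)).
pose proof (Rabs_triang (x (t + d) - c) (c - x t)).
rewrite <- (Rabs_Ropp (x t - c)) in *.
replace (- (x t - c)) with (c - x t) in * by ring.
replace (x (t + d) - c + (c - x t)) with (x (t + d) - x t) in * by ring. lra.
Qed.

Lemma barbalat_lyapunov (L dL h dh : R -> R) (T0 K B : R) :
  (forall t, T0 < t -> is_derive L t (dL t)) -> (forall t, T0 < t -> dL t <= - h t) ->
  (forall t, T0 < t -> 0 <= h t) -> (forall t, T0 < t -> B <= L t) ->
  (forall t, T0 < t -> is_derive h t (dh t)) -> (forall t, T0 < t -> Rabs (dh t) <= K) ->
  is_lim h p_infty 0.
Proof.
intros HL HdL Hh HB Hdh HK.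
assert (Hmono : forall s t, T0 < s -> s <= t -> L t <= L s).
{ apply (nonincreasing_of_deriv_nonpos L dL T0 HL).
  intros t Ht. pose proof (HdL t Ht). pose proof (Hh t Ht). lra. }
destruct (ex_lim_nonincreasing L T0 B Hmono HB) as [l Hl].
apply (barbalat L dL h dh T0 K l HL Hl); [|assumption..].
intros t Ht. pose proof (HdL t Ht). pose proof (Hh t Ht).
rewrite (Rabs_right (h t)), (Rabs_left1 (dL t)); lra.
Qed.

Lemma is_lim_of_sqr_dist (f : R -> R) (k l : R) : 0 < k ->
  is_lim (fun t => k * (f t - l) ^ 2) p_infty 0 -> is_lim f p_infty l.
Proof.
intros Hk Hf. apply is_lim_spec in Hf. apply is_lim_spec. intros eps.
pose proof (cond_pos eps) as Heps.
assert (Hkeps : 0 < k * (eps * eps)) by (apply Rmult_lt_0_compat; [exact Hk | nra]).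
destruct (Hf (mkposreal _ Hkeps)) as [T HT].
exists T. intros t Ht. specialize (HT t Ht). simpl in HT.
rewrite Rminus_0_r, Rabs_right in HT by (pose proof (pow2_ge_0 (f t - l)); nra).
assert ((f t - l) ^ 2 < eps * eps) by (apply (Rmult_lt_reg_l k); lra).
apply Rabs_lt_between. split; nra.
Qed.

Lemma filterlim_pos (F : (R -> Prop) -> Prop) (f : R -> R) (x : R) :
  filterlim f F (locally x) -> 0 < x -> F (fun t => 0 < f t).
Proof. intros Hf Hx. exact (Hf _ (open_gt 0 x Hx)). Qed.

Lemma continuous_induction (P : R -> Prop) :
  P 0 -> at_right 0 P ->
  (forall T, 0 < T -> (forall s, 0 <= s < T -> P s) -> locally T P) ->
  forall t, 0 <= t -> P t.
Proof.
intros HP0 [d0 Hd0] Hstep t0 Ht0. apply NNPP. intros Hnot.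
set (A := fun T => 0 <= T /\ forall s, 0 <= s <= T -> P s).
assert (Hbound : bound A).
{ exists t0. intros T [HT HP]. apply Rnot_lt_le. intros Hlt. apply Hnot, HP. lra. }
assert (HA0 : A 0) by (split; [lra | intros s Hs; replace s with 0 by lra; exact HP0]).
destruct (completeness A Hbound (ex_intro _ 0 HA0)) as [Ts [Hub Hlub]].
assert (Hbelow : forall s, 0 <= s < Ts -> P s).
{ intros s Hs. apply NNPP. intros Hns.
  assert (Ts <= s); [|lra].
  apply Hlub. intros T [HT HP]. apply Rnot_lt_le. intros Hlt. apply Hns, HP. lra. }
assert (HTs : 0 < Ts).
{ pose proof (cond_pos d0).
  assert (Hd0A : A (d0 / 2)); [|specialize (Hub _ Hd0A); lra].
  split; [lra|]. intros s Hs. destruct (Req_dec s 0) as [->|Hs0]; [exact HP0|].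
  apply Hd0; [apply ball_of_Rabs_lt; rewrite Rminus_0_r, Rabs_right|]; lra. }
destruct (Hstep Ts HTs Hbelow) as [d Hd].
pose proof (cond_pos d).
assert (HdA : A (Ts + d / 2)); [|specialize (Hub _ HdA); lra].
split; [lra|]. intros s Hs. destruct (Rlt_le_dec s Ts); [apply Hbelow; lra|].
apply Hd, ball_of_Rabs_lt. rewrite Rabs_right; lra.
Qed.

Definition volterra (c x : R) : R := x - c - c * ln (x / c).

Lemma volterra_nonneg (c x : R) : 0 < c -> 0 < x -> 0 <= volterra c x.
Proof.
intros Hc Hx. unfold volterra.
pose proof (ln_le_sub_1 (x / c) (Rdiv_lt_0_compat x c Hx Hc)).
assert (Hln : c * ln (x / c) <= c * (x / c - 1)) by (apply Rmult_le_compat_l; lra).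
replace (c * (x / c - 1)) with (x - c) in Hln by (field; lra). lra.
Qed.

Lemma is_derive_volterra (c : R) (f : R -> R) (t l : R) : 0 < c -> 0 < f t ->
  is_derive f t l -> is_derive (fun s => volterra c (f s)) t ((1 - c / f t) * l).
Proof.
intros Hc Hf Hd. unfold volterra. auto_derive.
- split; [exists l; exact Hd|]. split; [exists l; exact Hd|].
  split; [apply Rdiv_lt_0_compat; assumption | exact I].
- change (fun s => f s) with f. rewrite (is_derive_unique _ _ _ Hd). field. lra.
Qed.

Lemma sum3_ge_3_of_prod_1 (u v w : R) : 0 < u -> 0 < v -> 0 < w -> u * v * w = 1 ->
  3 <= u + v + w.
Proof.
intros Hu Hv Hw Hprod.
assert (Hln : ln u + ln v + ln w = 0)
  by (rewrite <- !ln_mult, Hprod, ln_1 by (try apply Rmult_lt_0_compat; assumption); reflexivity).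
pose proof (ln_le_sub_1 u Hu). pose proof (ln_le_sub_1 v Hv). pose proof (ln_le_sub_1 w Hw). lra.
Qed.

Section SEI.

Variables (c0 a b k1 k2 sg Ss Es Is : R) (S E I : R -> R).

Hypotheses (Ha : 0 < a) (Hb : 0 < b) (Hk2 : 0 < k2) (Hsg : 0 < sg) (Hsg_k1 : sg < k1)
  (HSs : 0 < Ss) (HEs : 0 < Es) (HIs : 0 < Is).

Hypotheses (HeqS : c0 - a * Ss * Is - b * Ss = 0) (HeqE : a * Ss * Is - k1 * Es = 0)
  (HeqI : sg * Es - k2 * Is = 0).

Hypotheses
  (HdS : forall t, 0 < t -> is_derive S t (c0 - a * S t * I t - b * S t))
  (HdE : forall t, 0 < t -> is_derive E t (a * S t * I t - k1 * E t))
  (HdI : forall t, 0 < t -> is_derive I t (sg * E t - k2 * I t)).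

Hypotheses (HcS : filterlim S (at_right 0) (locally (S 0)))
  (HcE : filterlim E (at_right 0) (locally (E 0)))
  (HcI : filterlim I (at_right 0) (locally (I 0)))
  (HS0 : 0 < S 0) (HE0 : 0 < E 0) (HI0 : 0 < I 0).

Lemma c0_pos : 0 < c0.
Proof. assert (0 < a * Ss * Is) by (repeat apply Rmult_lt_0_compat; assumption). nra. Qed.

Lemma SEI_pos_at (T : R) : 0 < T ->
  (forall s, 0 <= s < T -> 0 < S s /\ 0 < E s /\ 0 < I s) -> 0 < S T /\ 0 < E T /\ 0 < I T.
Proof.
intros HT Hbelow.
assert (HET : 0 < E T).
{ apply (pos_of_linear_inflow E (fun t => a * S t * I t) k1 (T / 2) T HdE); [lra | |].
  - intros t Ht. destruct (Hbelow t ltac:(lra)) as [HSt [_ HIt]].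
    apply Rlt_le. repeat apply Rmult_lt_0_compat; assumption.
  - apply Hbelow. lra. }
assert (HIT : 0 < I T).
{ apply (pos_of_linear_inflow I (fun t => sg * E t) k2 (T / 2) T HdI); [lra | |].
  - intros t Ht. destruct (Hbelow t ltac:(lra)) as [_ [HEt _]]. nra.
  - apply Hbelow. lra. }
split; [|split; assumption].
(* If [S T <= 0] then [S' T >= c0 > 0], so [S] lies below [S T] just before [T]. *)
apply Rnot_le_lt. intros HST.
assert (HdST : 0 < c0 - a * S T * I T - b * S T).
{ pose proof c0_pos. assert (0 < a * I T) by nra.
  assert (a * S T * I T <= 0) by nra. nra. }
destruct (lt_of_deriv_pos_left S T _ (T / 2) (HdS T HT) HdST) as [t [Ht HSt]]; [lra |].
destruct (Hbelow t ltac:(lra)) as [HSt' _]. lra.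
Qed.

Lemma SEI_pos (t : R) : 0 <= t -> 0 < S t /\ 0 < E t /\ 0 < I t.
Proof.
revert t. apply continuous_induction; [split; [|split]; assumption| |].
- apply filter_and; [|apply filter_and]; eapply filterlim_pos; eassumption.
- intros T HT Hbelow. destruct (SEI_pos_at T HT Hbelow) as [HST [HET HIT]].
  apply filter_and; [|apply filter_and].
  + apply (filterlim_pos _ S (S T)); [|exact HST].
    apply (ex_derive_continuous S). eexists. apply HdS, HT.
  + apply (filterlim_pos _ E (E T)); [|exact HET].
    apply (ex_derive_continuous E). eexists. apply HdE, HT.
  + apply (filterlim_pos _ I (I T)); [|exact HIT].
    apply (ex_derive_continuous I). eexists. apply HdI, HT.
Qed.

Lemma SEI_bounded : exists M : R,
  forall t, 1 < t -> Rabs (S t) <= M /\ Rabs (E t) <= M /\ Rabs (I t) <= M.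
Proof.
(* [S + E + I] loses mass at rate at least [m], which needs [sg < k1]. *)
set (m := Rmin b (Rmin (k1 - sg) k2)).
assert (Hm : 0 < m /\ m <= b /\ m <= k1 - sg /\ m <= k2).
{ unfold m. pose proof (Rmin_l (k1 - sg) k2). pose proof (Rmin_r (k1 - sg) k2).
  pose proof (Rmin_l b (Rmin (k1 - sg) k2)). pose proof (Rmin_r b (Rmin (k1 - sg) k2)).
  repeat split; try lra. repeat apply Rmin_pos; lra. }
destruct Hm as [Hm0 [Hmb [Hmk1 Hmk2]]].
set (W := fun t => S t + E t + I t).
assert (HdW : forall t, 0 < t -> is_derive W t (c0 - b * S t - (k1 - sg) * E t - k2 * I t)).
{ intros t Ht.
  replace (c0 - b * S t - (k1 - sg) * E t - k2 * I t) with
    ((c0 - a * S t * I t - b * S t) + (a * S t * I t - k1 * E t) + (sg * E t - k2 * I t)) by ring.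
  exact (is_derive_plus _ _ t _ _ (is_derive_plus _ _ t _ _ (HdS t Ht) (HdE t Ht)) (HdI t Ht)). }
assert (HW : forall t, 1 <= t -> W t - c0 / m <= Rabs (W 1 - c0 / m)).
{ assert (Hcmp : forall s t, 0 < s -> s <= t ->
            W t - c0 / m <= (W s - c0 / m) * exp (m * (s - t))).
  { apply (sub_le_of_deriv_le_linear W _ 0 m (c0 / m) HdW).
    intros u Hu. destruct (SEI_pos u ltac:(lra)) as [HSu [HEu HIu]].
    replace (m * (c0 / m - W u)) with (c0 - m * S u - m * E u - m * I u) by (unfold W; field; lra).
    nra. }
  intros t Ht. eapply Rle_trans; [apply (Hcmp 1 t); lra|].
  assert (Hexp : exp (m * (1 - t)) <= exp 0).
  { destruct (Rle_lt_or_eq_dec 1 t Ht) as [Hlt | <-].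
    - apply Rlt_le, exp_increasing. nra.
    - right. f_equal. ring. }
  rewrite exp_0 in Hexp.
  pose proof (Rle_abs (W 1 - c0 / m)). pose proof (Rabs_pos (W 1 - c0 / m)).
  pose proof (exp_pos (m * (1 - t))). nra. }
exists (c0 / m + Rabs (W 1 - c0 / m)). intros t Ht.
destruct (SEI_pos t ltac:(lra)) as [HSt [HEt HIt]].
specialize (HW t ltac:(lra)). change (W t) with (S t + E t + I t) in HW.
rewrite (Rabs_right (S t)), (Rabs_right (E t)), (Rabs_right (I t)) by lra. repeat split; lra.
Qed.

Lemma lyapunov_deriv_le (s e i : R) : 0 < s -> 0 < e -> 0 < i ->
  (1 - Ss / s) * (c0 - a * s * i - b * s) + (1 - Es / e) * (a * s * i - k1 * e)
  + k1 / sg * ((1 - Is / i) * (sg * e - k2 * i)) <= - b * (s - Ss) ^ 2 / s.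
Proof.
intros Hs He Hi.
assert (Hc0 : c0 = a * Ss * Is + b * Ss) by lra.
assert (Hk1 : k1 = a * Ss * Is / Es) by (field_simplify_eq; lra).
assert (Hk2' : k2 = sg * Es / Is) by (field_simplify_eq; lra).
(* [L'] is [- b (s - Ss)^2 / s] plus [a Ss Is] times 3 minus three ratios with product 1. *)
assert (Hamgm : 3 <= Ss / s + s * i * Es / (Ss * Is * e) + e * Is / (Es * i)).
{ apply sum3_ge_3_of_prod_1; try (apply Rdiv_lt_0_compat; repeat apply Rmult_lt_0_compat; lra).
  field. repeat split; lra. }
rewrite Hc0, Hk2', Hk1.
replace ((1 - Ss / s) * (a * Ss * Is + b * Ss - a * s * i - b * s)
  + (1 - Es / e) * (a * s * i - a * Ss * Is / Es * e)
  + a * Ss * Is / Es / sg * ((1 - Is / i) * (sg * e - sg * Es / Is * i)))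
  with (- b * (s - Ss) ^ 2 / s
        + a * Ss * Is * (3 - (Ss / s + s * i * Es / (Ss * Is * e) + e * Is / (Es * i))))
  by (field; repeat split; lra).
assert (0 < a * Ss * Is) by (repeat apply Rmult_lt_0_compat; lra). nra.
Qed.

Section Bounded.

Variable M : R.

Hypotheses (HSM : forall t, 1 < t -> Rabs (S t) <= M) (HEM : forall t, 1 < t -> Rabs (E t) <= M)
  (HIM : forall t, 1 < t -> Rabs (I t) <= M).

(* Bounds [Rabs e] by a constant, for [e] a polynomial in [S t], [E t], [I t] with [1 < t]. *)
Ltac bound_abs :=
  repeat first
    [ eapply Rabs_add_le | eapply Rabs_sub_le | eapply Rabs_mul_le | eapply Rabs_opp_le
    | match goal with
      | H : forall t, 1 < t -> Rabs (?f t) <= _ |- Rabs (?f ?t) <= _ => apply H; lra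
      end
    | apply Rle_refl ].

Lemma S_tends_to_Ss : is_lim S p_infty Ss.
Proof.
assert (HM : 0 < M).
{ destruct (SEI_pos 2 ltac:(lra)) as [HS2 _]. pose proof (HSM 2 ltac:(lra)) as HS2M.
  rewrite Rabs_right in HS2M by lra. lra. }
apply (is_lim_of_sqr_dist S (b / M) Ss); [apply Rdiv_lt_0_compat; assumption|].
eapply (barbalat_lyapunov
  (fun t => volterra Ss (S t) + volterra Es (E t) + k1 / sg * volterra Is (I t))
  (fun t => (1 - Ss / S t) * (c0 - a * S t * I t - b * S t)
            + (1 - Es / E t) * (a * S t * I t - k1 * E t)
            + k1 / sg * ((1 - Is / I t) * (sg * E t - k2 * I t)))
  _ (fun t => b / M * (2 * (S t - Ss) * (c0 - a * S t * I t - b * S t))) 1 _ 0).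
- intros t Ht. destruct (SEI_pos t ltac:(lra)) as [HSt [HEt HIt]].
  apply (is_derive_plus (fun t => volterra Ss (S t) + volterra Es (E t))).
  + apply (is_derive_plus (fun t => volterra Ss (S t))); apply is_derive_volterra;
      auto; [apply HdS | apply HdE]; lra.
  + apply is_derive_scal, is_derive_volterra; auto. apply HdI. lra.
- intros t Ht. destruct (SEI_pos t ltac:(lra)) as [HSt [HEt HIt]].
  eapply Rle_trans; [apply lyapunov_deriv_le; assumption|].
  assert (HSt' : S t <= M) by (pose proof (HSM t Ht); pose proof (Rle_abs (S t)); lra).
  assert (Hsq : 0 <= b * (S t - Ss) ^ 2) by (pose proof (pow2_ge_0 (S t - Ss)); nra).
  assert (b * (S t - Ss) ^ 2 / M <= b * (S t - Ss) ^ 2 / S t).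
  { apply Rmult_le_compat_l; [exact Hsq|]. apply Rinv_le_contravar; assumption. }
  unfold Rdiv in *. lra.
- intros t Ht. pose proof (pow2_ge_0 (S t - Ss)).
  apply Rmult_le_pos; [apply Rlt_le, Rdiv_lt_0_compat |]; assumption.
- intros t Ht. destruct (SEI_pos t ltac:(lra)) as [HSt [HEt HIt]].
  pose proof (volterra_nonneg Ss (S t) HSs HSt). pose proof (volterra_nonneg Es (E t) HEs HEt).
  pose proof (volterra_nonneg Is (I t) HIs HIt).
  assert (0 <= k1 / sg * volterra Is (I t))
    by (apply Rmult_le_pos; [apply Rlt_le, Rdiv_lt_0_compat|]; lra).
  lra.
- intros t Ht. auto_derive; [exists (c0 - a * S t * I t - b * S t); apply HdS; lra|].
  change (fun x => S x) with S. rewrite (is_derive_unique _ _ _ (HdS t ltac:(lra))). ring.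
- intros t Ht. bound_abs.
Qed.

Lemma dS_tends_to_0 : is_lim (fun t => c0 - a * S t * I t - b * S t) p_infty 0.
Proof.
eapply (barbalat S (fun t => c0 - a * S t * I t - b * S t) _
  (fun t => - a * ((c0 - a * S t * I t - b * S t) * I t + S t * (sg * E t - k2 * I t))
            - b * (c0 - a * S t * I t - b * S t)) 1 _ Ss).
- intros t Ht. apply HdS. lra.
- exact S_tends_to_Ss.
- intros t Ht. apply Rle_refl.
- intros t Ht. auto_derive.
  + repeat split; eexists; first [apply HdS | apply HdI]; lra.
  + change (fun x => S x) with S. change (fun x => I x) with I.
    rewrite (is_derive_unique _ _ _ (HdS t ltac:(lra))).
    rewrite (is_derive_unique _ _ _ (HdI t ltac:(lra))).
    ring.
- intros t Ht. bound_abs.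
Qed.

Lemma I_tends_to_Is : is_lim I p_infty Is.
Proof.
assert (Hq : is_lim (fun t => (c0 - b * S t - (c0 - a * S t * I t - b * S t)) / (a * S t))
                    p_infty ((c0 - b * Ss - 0) / (a * Ss))).
{ apply (is_lim_div _ _ p_infty (c0 - b * Ss - 0) (a * Ss)).
  - apply is_lim_minus'; [apply is_lim_minus'|exact dS_tends_to_0].
    + apply is_lim_const.
    + exact (is_lim_scal_l S b p_infty Ss S_tends_to_Ss).
  - exact (is_lim_scal_l S a p_infty Ss S_tends_to_Ss).
  - intros Heq. injection Heq as Heq. nra.
  - exact Logic.I. }
replace Is with ((c0 - b * Ss - 0) / (a * Ss)) by (field_simplify_eq; lra).
apply (is_lim_ext_loc _ _ _ _) with (2 := Hq). exists 0. intros t Ht.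
destruct (SEI_pos t ltac:(lra)) as [HSt _]. field. lra.
Qed.

Lemma dI_tends_to_0 : is_lim (fun t => sg * E t - k2 * I t) p_infty 0.
Proof.
eapply (barbalat I (fun t => sg * E t - k2 * I t) _
  (fun t => sg * (a * S t * I t - k1 * E t) - k2 * (sg * E t - k2 * I t)) 1 _ Is).
- intros t Ht. apply HdI. lra.
- exact I_tends_to_Is.
- intros t Ht. apply Rle_refl.
- intros t Ht. auto_derive.
  + repeat split; eexists; first [apply HdE | apply HdI]; lra.
  + change (fun x => E x) with E. change (fun x => I x) with I.
    rewrite (is_derive_unique _ _ _ (HdE t ltac:(lra))).
    rewrite (is_derive_unique _ _ _ (HdI t ltac:(lra))).
    ring.
- intros t Ht. bound_abs.
Qed.

Lemma E_tends_to_Es : is_lim E p_infty Es.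
Proof.
assert (Hq : is_lim (fun t => / sg * ((sg * E t - k2 * I t) + k2 * I t))
                    p_infty (/ sg * (0 + k2 * Is))).
{ apply (is_lim_scal_l _ (/ sg) p_infty (0 + k2 * Is)).
  apply is_lim_plus'; [exact dI_tends_to_0 | exact (is_lim_scal_l I k2 p_infty Is I_tends_to_Is)]. }
replace Es with (/ sg * (0 + k2 * Is)) by (field_simplify_eq; lra).
apply (is_lim_ext_loc _ _ _ _) with (2 := Hq). exists 0. intros t Ht. field. lra.
Qed.

End Bounded.

Theorem SEI_converges : is_lim S p_infty Ss /\ is_lim E p_infty Es /\ is_lim I p_infty Is.
Proof.
destruct SEI_bounded as [M HM].
assert (HSM : forall t, 1 < t -> Rabs (S t) <= M) by (intros t Ht; apply HM, Ht).
assert (HEM : forall t, 1 < t -> Rabs (E t) <= M) by (intros t Ht; apply HM, Ht).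
assert (HIM : forall t, 1 < t -> Rabs (I t) <= M) by (intros t Ht; apply HM, Ht).
split; [|split].
- apply (S_tends_to_Ss M); assumption.
- apply (E_tends_to_Es M); assumption.
- apply (I_tends_to_Is M); assumption.
Qed.

End SEI.

Lemma Ie_pos (N mu beta sigma gamma p rho : R) :
  0 < N -> 0 < mu -> 0 < beta -> 0 < sigma -> 0 < gamma -> 0 < p -> rho < 1 ->
  repro_number N mu beta sigma gamma p rho > 1 -> 0 < Ie N mu beta sigma gamma p rho.
Proof.
intros HN Hmu Hbeta Hsig Hgam Hp Hrho HR0. unfold repro_number in HR0. unfold Ie.
set (n := mu * N * sigma * beta * (1 - rho)) in *.
set (d := (sigma + mu) * (gamma + mu) * (p + mu * N)) in *.
assert (Hd : 0 < d) by (unfold d; repeat apply Rmult_lt_0_compat; nra).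
assert (Hnd : d < n) by (replace n with (n / d * d) by (field; lra); nra).
apply Rdiv_lt_0_compat; [lra | repeat apply Rmult_lt_0_compat; lra].
Qed.

Lemma endemic_equilibrium (N mu beta sigma gamma p rho : R) :
  0 < N -> 0 < mu -> 0 < beta -> 0 < sigma -> 0 < gamma -> 0 < p -> rho < 1 ->
  repro_number N mu beta sigma gamma p rho > 1 ->
  let a := beta / N * (1 - rho) in
  let Ss := Se N mu beta sigma gamma rho in
  let Es := Ee N mu beta sigma gamma p rho in
  let Is := Ie N mu beta sigma gamma p rho in
  0 < Ss /\ 0 < Es /\ 0 < Is /\
  mu * N - a * Ss * Is - (p / N + mu) * Ss = 0 /\ a * Ss * Is - (sigma + mu) * Es = 0 /\
  sigma * Es - (gamma + mu) * Is = 0.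
Proof.
intros HN Hmu Hbeta Hsig Hgam Hp Hrho HR0. cbv zeta.
pose proof (Ie_pos N mu beta sigma gamma p rho HN Hmu Hbeta Hsig Hgam Hp Hrho HR0) as HIe.
split; [unfold Se; apply Rdiv_lt_0_compat; repeat apply Rmult_lt_0_compat; lra|].
split; [unfold Ee; apply Rmult_lt_0_compat; [apply Rdiv_lt_0_compat|]; lra|].
split; [exact HIe|].
unfold Se, Ee, Ie. split; [|split]; field; repeat split; lra.
Qed.

Lemma is_solution_SEI (N mu beta sigma gamma p rho : R) (S E I Rr V : R -> R) :
  is_solution N mu beta sigma gamma p rho S E I Rr V -> forall t, 0 < t ->
  is_derive S t (mu * N - beta / N * (1 - rho) * S t * I t - (p / N + mu) * S t) /\
  is_derive E t (beta / N * (1 - rho) * S t * I t - (sigma + mu) * E t) /\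
  is_derive I t (sigma * E t - (gamma + mu) * I t).
Proof.
intros [Hd _] t Ht. destruct (Hd t Ht) as (HS & HE & HI & _).
split; [|split; [|exact HI]].
- replace (mu * N - beta / N * (1 - rho) * S t * I t - (p / N + mu) * S t)
    with (mu * N - beta / N * S t * (1 - rho) * I t - p / N * S t - mu * S t) by ring.
  exact HS.
- replace (beta / N * (1 - rho) * S t * I t) with (beta / N * S t * (1 - rho) * I t) by ring.
  exact HE.
Qed.

Theorem mainTheorem13 (N mu beta sigma gamma p rho : R)
  (S E I Rr V : R -> R) :
  0 < N -> 0 < mu -> 0 < beta -> 0 < sigma -> 0 < gamma -> 0 < p ->
  0 < rho -> rho < 1 ->
  repro_number N mu beta sigma gamma p rho > 1 ->
  is_solution N mu beta sigma gamma p rho S E I Rr V ->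
  in_Sigma N (S 0) (E 0) (I 0) (Rr 0) (V 0) ->
  in_int_Omega N (S 0) (E 0) (I 0) ->
  is_lim S p_infty (Se N mu beta sigma gamma rho) /\
  is_lim E p_infty (Ee N mu beta sigma gamma p rho) /\
  is_lim I p_infty (Ie N mu beta sigma gamma p rho) /\
  is_lim Rr p_infty (Req N mu beta sigma gamma p rho) /\
  is_lim V p_infty (Ve N mu beta sigma gamma p rho).
Proof.
intros HN Hmu Hbeta Hsig Hgam Hp _ Hrho HR0 Hsol _ (HS0 & HE0 & HI0 & _).
destruct (endemic_equilibrium N mu beta sigma gamma p rho HN Hmu Hbeta Hsig Hgam Hp Hrho HR0)
  as (HSe & HEe & HIe & HeqS & HeqE & HeqI).
assert (Ha : 0 < beta / N * (1 - rho)) by (apply Rmult_lt_0_compat; [apply Rdiv_lt_0_compat|]; lra).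
assert (Hb : 0 < p / N + mu) by (pose proof (Rdiv_lt_0_compat p N Hp HN); lra).
pose proof (is_solution_SEI _ _ _ _ _ _ _ _ _ _ _ _ Hsol) as HdSEI.
destruct Hsol as (HdRV & HcS & HcE & HcI & _).
destruct (SEI_converges (mu * N) (beta / N * (1 - rho)) (p / N + mu) (sigma + mu) (gamma + mu)
  sigma (Se N mu beta sigma gamma rho) (Ee N mu beta sigma gamma p rho)
  (Ie N mu beta sigma gamma p rho) S E I) as (HlimS & HlimE & HlimI);
  try (intros t Ht; apply HdSEI, Ht); try eassumption; try lra.
split; [exact HlimS | split; [exact HlimE | split; [exact HlimI | split]]].
- replace (Req N mu beta sigma gamma p rho) with (gamma * Ie N mu beta sigma gamma p rho / mu)
    by (unfold Req; field; lra).
  apply (is_lim_linear_ode Rr (fun t => gamma * I t)); [lra | intros t Ht; apply HdRV, Ht |].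
  exact (is_lim_scal_l I gamma p_infty _ HlimI).
- replace (Ve N mu beta sigma gamma p rho) with (p / N * Se N mu beta sigma gamma rho / mu)
    by (unfold Ve; field; lra).
  apply (is_lim_linear_ode V (fun t => p / N * S t)); [lra | intros t Ht; apply HdRV, Ht |].
  exact (is_lim_scal_l S (p / N) p_infty _ HlimS).
Qed.
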